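(* Let $p\ge1$, let $\mathcal{R}\subseteq\mathbb{R}$, and let $T:\mathbb{R}^M\times\cdots\times\mathbb{R}^M\to\mathbb{R}^D$ ($N$ factors) be a real $N$-linear map, $T(a^{(1)},\dots,a^{(N)})_i=\sum_sT_{i,s}\prod_ka^{(k)}_{s_k}$, which is a contraction on $\mathcal{R}^M\times\cdots\times\mathcal{R}^M$ with respect to the $p$-norm: $\|T(a^{(1)},\dots,a^{(N)})\|_p\le\prod_k\|a^{(k)}\|_p$ for all $a^{(k)}\in\mathcal{R}^M$. Then every local hidden variable model whose values lie in $\mathcal{R}$ satisfies $$\Big\|\big\langle T(A^{(1)},\dots,A^{(N)})\big\rangle\Big\|_p^p\le\Big\langle\prod_{k=1}^N\|A^{(k)}\|_p^p\Big\rangle,$$ whenever the right-hand side is finite.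
   Context: $\|a\|_p=(\sum_j|a_j|^p)^{1/p}$. A local hidden variable model is a probability space $(\Lambda,\mu)$ with measurable functions $A^{(k)}_j:\Lambda\to\mathcal{R}$ ($k=1,\dots,N$ site, $j=1,\dots,M$ observable); $A^{(k)}=(A^{(k)}_1,\dots,A^{(k)}_M)$ and $\langle\cdot\rangle$ is expectation w.r.t. $\mu$, taken componentwise for vectors. *)

From HB Require Import structures.
From mathcomp Require Import all_boot all_order all_algebra.
From mathcomp Require Import all_classical all_reals all_analysis.
Set Implicit Arguments. Unset Strict Implicit. Unset Printing Implicit Defensive.
Import Order.TTheory GRing.Theory Num.Theory.
Local Open Scope ring_scope.

Definition pnorm (R : realType) (n : nat) (p : R) (v : 'I_n -> R) : R :=
  (\sum_(j < n) `|v j| `^ p) `^ p^-1.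

Definition multilin (R : realType) (N M D : nat)
  (T : 'I_D -> {ffun 'I_N -> 'I_M} -> R) (a : 'I_N -> 'I_M -> R) : 'I_D -> R :=
  fun i => \sum_(s : {ffun 'I_N -> 'I_M}) T i s * \prod_(k < N) a k (s k).

(** Pointwise in the hidden variable, the contraction property bounds
    [sum_i |T(A)_i|^p] by [prod_k ||A^(k)||_p^p]; integrating gives the
    right-hand side. On the left, Jensen's inequality [|<f>|^p <= <|f|^p>]
    for the probability [mu] moves the expectation outside each [|.|^p]; it
    follows from Hoelder's inequality against the constant function [1]. *)
From HB Require Import structures.
From mathcomp Require Import all_boot all_order all_algebra.
From mathcomp Require Import all_classical all_reals all_analysis.
From mathcomp Require Import measurable_realfun.
Import Order.TTheory GRing.Theory Num.Theory.
Local Open Scope ring_scope.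
Local Open Scope classical_set_scope.

Section probability_Lnorm.
Context d (Lam : measurableType d) (R : realType) (mu : probability Lam R).
Local Open Scope ereal_scope.

Lemma integral_normr_le_Lnorm (f : Lam -> R) (p : R) :
  measurable_fun setT f -> (1 <= p)%R ->
  \int[mu]_x (`|f x|)%:E <= 'N[mu]_p%:E[EFin \o f].
Proof.
move=> mf p1; have [->|pn1] := eqVneq p 1%R.
  by rewrite Lnorm1.
have p0 : (0 < p)%R by apply: lt_le_trans p1.
pose q := (p / (p - 1))%R.
have q0 : (0 < q)%R by rewrite divr_gt0 // subr_gt0 lt_neqAle eq_sym pn1.
have pq : (p^-1 + q^-1 = 1)%R by rewrite invf_div mulrBl divff ?gt_eqF // mul1r addrC subrK.
have := hoelder mu mf (measurable_cst (1 : R)%R) p0 q0 pq.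
rewrite Lnorm1 (@eq_Lnorm _ _ _ mu q%:E (EFin \o cst (1 : R)%R) (cst 1)) //.
rewrite Lnorm_cst1 (_ : mu [set: Lam] `^ q^-1 = 1) ?mule1; last first.
  by rewrite probability_setT poweR1r.
by under eq_integral do rewrite /= mulr1.
Qed.

Lemma normr_Rintegral_powR_le (f : Lam -> R) (p : R) :
  measurable_fun setT f -> (1 <= p)%R ->
  (`|Rintegral mu setT f| `^ p)%:E <= \int[mu]_x (`|f x| `^ p)%:E.
Proof.
move=> mf p1; have p0 : (0 < p)%R by apply: lt_le_trans p1.
set I := \int[mu]_x _.
have [->|Ioo] := eqVneq I +oo; first by rewrite leey.
have NpE : 'N[mu]_p%:E[EFin \o f] = I `^ p^-1.
  by rewrite unlock; congr (_ `^ _); apply: eq_integral => x _; rewrite /= poweR_EFin.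
have Ifin : I \is a fin_num.
  by rewrite ge0_fin_numE ?ltey // integral_ge0 // => x _; rewrite lee_fin powR_ge0.
have Npfin : 'N[mu]_p%:E[EFin \o f] \is a fin_num by rewrite NpE fin_num_poweR.
have normf_le := @integral_normr_le_Lnorm f p mf p1.
have fint : mu.-integrable setT (EFin \o f).
  apply/integrableP; split; first exact/measurable_EFinP.
  by apply: le_lt_trans normf_le _; rewrite ltey_eq Npfin.
have normf_fin : \int[mu]_x (`|f x|)%:E \is a fin_num.
  by rewrite ge0_fin_numE ?(le_lt_trans normf_le) ?ltey_eq ?Npfin // integral_ge0.
have le_Np : (`|Rintegral mu setT f| <= fine 'N[mu]_p%:E[EFin \o f])%R.
  apply: le_trans (le_normr_Rintegral measurableT fint) _.
  by rewrite -lee_fin /Rintegral !fineK.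
have <- : ((fine 'N[mu]_p%:E[EFin \o f]) `^ p)%:E = I.
  by rewrite -fine_poweR poweR_Lnorm ?gt_eqF // fineK.
rewrite lee_fin; apply: ge0_ler_powR le_Np; rewrite ?nnegrE ?fine_ge0 ?Lnorm_ge0 //.
exact: ltW.
Qed.

End probability_Lnorm.

Lemma powR_prod (R : realType) (I : Type) (r : seq I) (P : pred I) (x : I -> R) (p : R) :
  (forall i, P i -> 0 <= x i) ->
  (\prod_(i <- r | P i) x i) `^ p = \prod_(i <- r | P i) x i `^ p.
Proof.
move=> x0; pose K (a b : R) := 0 <= a /\ a `^ p = b.
suff [] : K (\prod_(i <- r | P i) x i) (\prod_(i <- r | P i) x i `^ p) by [].
apply: (big_rec2 K); first by split; rewrite ?powR1.
by move=> i a b Pi [a0 <-]; split; rewrite ?mulr_ge0 ?powRM ?x0.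
Qed.

Section pnorm.
Context (R : realType) (n : nat) (p : R).

Lemma pnorm_ge0 (v : 'I_n -> R) : 0 <= pnorm p v.
Proof. exact: powR_ge0. Qed.

Lemma pnorm_powR (v : 'I_n -> R) : 0 < p -> pnorm p v `^ p = \sum_(j < n) `|v j| `^ p.
Proof.
move=> p0; rewrite /pnorm -powRrM mulVf ?gt_eqF // powRr1 //.
by apply: sumr_ge0 => j _; rewrite powR_ge0.
Qed.

Lemma sum_powR_le_of_pnorm_le (v : 'I_n -> R) (c : R) : 0 < p ->
  pnorm p v <= c -> \sum_(j < n) `|v j| `^ p <= c `^ p.
Proof.
move=> p0 vc; rewrite -pnorm_powR //.
have c0 : 0 <= c := le_trans (pnorm_ge0 v) vc.
by apply: ge0_ler_powR vc; rewrite ?nnegrE ?pnorm_ge0 ?(ltW p0).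
Qed.

End pnorm.

Section measurability.
Context d (Lam : measurableType d) (R : realType).

Lemma measurable_normr_powR (f : Lam -> R) (p : R) :
  measurable_fun setT f -> measurable_fun setT (fun x => `|f x| `^ p).
Proof.
move=> mf; apply: (measurableT_comp (measurable_powR p)).
exact: measurableT_comp (@normr_measurable _ _) mf.
Qed.

Lemma measurable_pnorm (n : nat) (p : R) (f : 'I_n -> Lam -> R) :
  (forall j, measurable_fun setT (f j)) ->
  measurable_fun setT (fun x => pnorm p (f ^~ x)).
Proof.
move=> mf; apply: (measurableT_comp (measurable_powR _)).
by apply: measurable_sum => j; apply: measurable_normr_powR.
Qed.

Lemma measurable_multilin (N M D : nat) (T : 'I_D -> {ffun 'I_N -> 'I_M} -> R)
    (A : 'I_N -> 'I_M -> Lam -> R) (i : 'I_D) :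
  (forall k j, measurable_fun setT (A k j)) ->
  measurable_fun setT (fun x => multilin T (fun k j => A k j x) i).
Proof.
move=> mA; apply: measurable_sum => s; apply: measurable_funM => //.
by apply: (measurable_prod (s := index_enum _) (h := fun k x => A k (s k) x)) => k _.
Qed.

End measurability.

Theorem proposition8 (R : realType) (p : R) (N M D : nat)
  (Rs : set R) (T : 'I_D -> {ffun 'I_N -> 'I_M} -> R)
  (d : measure_display) (Lam : measurableType d) (mu : probability Lam R)
  (A : 'I_N -> 'I_M -> Lam -> R) :
  1 <= p ->
  (forall a : 'I_N -> 'I_M -> R, (forall k j, Rs (a k j)) ->
     pnorm p (multilin T a) <= \prod_(k < N) pnorm p (a k)) ->
  (forall k j, measurable_fun setT (A k j)) ->
  (forall k j x, Rs (A k j x)) ->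
  (\int[mu]_x ((\prod_(k < N) pnorm p (fun j => A k j x) `^ p)%:E) < +oo)%E ->
  ((pnorm p (fun i => Rintegral mu setT (fun x => multilin T (fun k j => A k j x) i))
     `^ p)%:E
   <= \int[mu]_x ((\prod_(k < N) pnorm p (fun j => A k j x) `^ p)%:E))%E.
Proof.
move=> p1 contractT mA RA _; have p0 : 0 < p := lt_le_trans ltr01 p1.
have mTA i := @measurable_multilin _ Lam R N M D T A i mA.
rewrite pnorm_powR // -sumEFin.
apply: le_trans; first by apply: lee_sum => i _; exact: normr_Rintegral_powR_le (mTA i) p1.
rewrite -ge0_integral_sum //; last first.
  by move=> i; apply/measurable_EFinP; apply: measurable_normr_powR.
apply: ge0_le_integral => //.
- by move=> x _; apply: sume_ge0 => i _; rewrite lee_fin powR_ge0.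
- by apply: emeasurable_sum => i; apply/measurable_EFinP; apply: measurable_normr_powR.
- apply/measurable_EFinP; apply: measurable_prod => k _.
  by apply: (measurableT_comp (measurable_powR p)); apply: measurable_pnorm.
move=> x _; rewrite sumEFin lee_fin -powR_prod => [|k _]; last exact: pnorm_ge0.
exact: sum_powR_le_of_pnorm_le p0 (contractT _ (fun k j => RA k j x)).
Qed.
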